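(* Let $G$ be a group and let $H$ be a subgroup of $G$ that is closed in the profinite topology of $G$. Then $\mu(H)=\frac{1}{[G:H]}$ (interpreted as $0$ when $[G:H]=\infty$).
   Context: The profinite topology on a group $G$ has as a basis the cosets of finite index subgroups of $G$; equivalently a subgroup is closed iff it is an intersection of finite index subgroups. The profinite measure of a subset $S\subseteq G$ is $\mu(S)=\inf_{\varphi}\frac{|\varphi(S)|}{|\varphi(G)|}$, where $\varphi$ ranges over all epimorphisms from $G$ onto finite groups. *)

From mathcomp Require Import all_boot all_order all_algebra all_fingroup.
From mathcomp Require Import boolp reals.
Set Implicit Arguments. Unset Strict Implicit. Unset Printing Implicit Defensive.
Import GRing.Theory Num.Theory.

Record agroup := AGroup {
  carrier :> Type;
  gmul : carrier -> carrier -> carrier;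
  gone : carrier;
  ginv : carrier -> carrier;
  gmulA : forall x y z, gmul x (gmul y z) = gmul (gmul x y) z;
  gmul1 : forall x, gmul gone x = x;
  gmulV : forall x, gmul (ginv x) x = gone
}.

Definition is_subgroup (G : agroup) (H : G -> Prop) : Prop :=
  H (gone G) /\ (forall x y, H x -> H y -> H (gmul x y)) /\
  (forall x, H x -> H (ginv x)).

(* [G : H] = n : the left cosets x H are indexed by exactly n representatives *)
Definition has_index (G : agroup) (H : G -> Prop) (n : nat) : Prop :=
  exists f : 'I_n -> G, forall x : G, exists! i : 'I_n, H (gmul (ginv (f i)) x).

Definition finite_index_subgroup (G : agroup) (K : G -> Prop) : Prop :=
  is_subgroup K /\ exists n, has_index K n.

(* H closed in the profinite topology: H is the intersection of the
   finite index subgroups containing it. *)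
Definition profinitely_closed (G : agroup) (H : G -> Prop) : Prop :=
  forall x : G,
    (forall K : G -> Prop, finite_index_subgroup K ->
       (forall y, H y -> K y) -> K x) -> H x.

Definition is_epi (G : agroup) (gT : finGroupType) (phi : G -> gT) : Prop :=
  (forall x y, phi (gmul x y) = (phi x * phi y)%g) /\
  (forall z : gT, exists x, phi x = z).

Definition img (G : agroup) (gT : finGroupType) (phi : G -> gT) (S : G -> Prop)
  : {set gT} := finset (fun z => `[< exists x, S x /\ phi x = z >]).

Definition pmeasure (R : realType) (G : agroup) (S : G -> Prop) : R :=
  inf (fun r : R => exists (gT : finGroupType) (phi : G -> gT),
         is_epi phi /\ r = (#|img phi S|%:R / #|[set: gT]|%:R)%R).

From mathcomp Require Import all_boot all_order all_algebra all_fingroup.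
From mathcomp Require Import boolp reals.
Set Implicit Arguments. Unset Strict Implicit. Unset Printing Implicit Defensive.
Import Order.TTheory GRing.Theory Num.Theory.

(* If [G : H] = n with coset representatives g_i, any epimorphism phi onto a
   finite group covers its target by the n translates phi(g_i) phi(H), so
   |phi(H)| / |phi(G)| >= 1/n; equality holds for the permutation action of G
   on the cosets of H, where H is the full preimage of its image.  If H has
   infinite index, closedness yields finite index subgroups L containing H of
   arbitrarily large index c, and monotonicity of mu gives mu(H) <= 1/c. *)

Section GroupLemmas.
Variable G : agroup.
Implicit Types x y a b : G.

Lemma gmulgV x : gmul x (ginv x) = gone G.
Proof.
have idem : gmul (gmul x (ginv x)) (gmul x (ginv x)) = gmul x (ginv x).
  by rewrite -gmulA [gmul (ginv x) _]gmulA gmulV gmul1.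
by rewrite -[LHS]gmul1 -(gmulV (gmul x (ginv x))) -gmulA idem.
Qed.

Lemma gmulg1 x : gmul x (gone G) = x.
Proof. by rewrite -(gmulV x) gmulA gmulgV gmul1. Qed.

Lemma gmulKg a x : gmul (ginv a) (gmul a x) = x.
Proof. by rewrite gmulA gmulV gmul1. Qed.

Lemma gmulKVg a x : gmul a (gmul (ginv a) x) = x.
Proof. by rewrite gmulA gmulgV gmul1. Qed.

Lemma gmulI a : injective (gmul a).
Proof. by move=> x y e; rewrite -(gmulKg a x) e gmulKg. Qed.

Lemma ginvM a b : ginv (gmul a b) = gmul (ginv b) (ginv a).
Proof.
apply: (@gmulI (gmul a b)).
by rewrite gmulgV -gmulA [gmul b _]gmulA gmulgV gmul1 gmulgV.
Qed.

Lemma ginvK a : ginv (ginv a) = a.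
Proof. by apply: (@gmulI (ginv a)); rewrite gmulgV gmulV. Qed.

Variable K : G -> Prop.
Hypothesis sK : is_subgroup K.

Lemma subgroup1 : K (gone G).
Proof. by case: sK. Qed.

Lemma subgroupM x y : K x -> K y -> K (gmul x y).
Proof. by case: sK => _ [KM _]; apply: KM. Qed.

Lemma subgroupV x : K x -> K (ginv x).
Proof. by case: sK => _ [_ KV]; apply: KV. Qed.

End GroupLemmas.

Lemma is_subgroupT (G : agroup) : is_subgroup (fun _ : G => True).
Proof. by split. Qed.

Lemma is_subgroupI (G : agroup) (K1 K2 : G -> Prop) :
  is_subgroup K1 -> is_subgroup K2 -> is_subgroup (fun x => K1 x /\ K2 x).
Proof.
move=> s1 s2; split; first by split; apply: subgroup1.
split=> [x y [K1x K2x] [K1y K2y]|x [K1x K2x]].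
  by split; apply: subgroupM.
by split; apply: subgroupV.
Qed.

(* [f] lists representatives of the left cosets of [K] and [idx x] is the
   position of the coset [x K]. *)
Definition is_coset_index (G : agroup) (K : G -> Prop) n (f : 'I_n -> G) (idx : G -> 'I_n) :=
  (forall x, K (gmul (ginv (f (idx x))) x)) /\
  (forall x i, K (gmul (ginv (f i)) x) -> i = idx x).

Lemma has_index_coset_index (G : agroup) (K : G -> Prop) n :
  has_index K n -> exists f idx, @is_coset_index G K n f idx.
Proof.
move=> [f hf]; exists f.
have ex x : exists i, K (gmul (ginv (f i)) x) /\ forall j, K (gmul (ginv (f j)) x) -> i = j.
  by have [i [Hi U]] := hf x; exists i.
exists (fun x => proj1_sig (cid (ex x))); split=> [x|x i Hi].
  by case: (cid (ex x)) => i [].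
by case: (cid (ex x)) => j [_ U] /=; apply/esym/U.
Qed.

Lemma has_indexT (G : agroup) : has_index (fun _ : G => True) 1.
Proof. by exists (fun _ => gone G) => x; exists ord0; split=> // i _; apply/esym/ord1. Qed.

Section CosetIndex.
Variables (G : agroup) (K : G -> Prop) (n : nat) (f : 'I_n -> G) (idx : G -> 'I_n).
Hypotheses (sK : is_subgroup K) (ci : is_coset_index K f idx).

Lemma coset_index_eq x y : idx y = idx x <-> K (gmul (ginv y) x).
Proof.
case: ci => rep uniq; split=> [e|Kyx].
  have := subgroupM sK (subgroupV sK (rep y)) (rep x).
  by rewrite e ginvM ginvK -gmulA gmulKVg.
by apply: uniq; have := subgroupM sK (rep y) Kyx; rewrite -gmulA gmulKVg.
Qed.

Lemma coset_index_rep i : idx (f i) = i.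
Proof. by apply/esym/(proj2 ci); rewrite gmulV; apply: subgroup1. Qed.

Lemma coset_perm_inj g : injective (fun i => idx (gmul (ginv g) (f i))).
Proof.
move=> i j /coset_index_eq; rewrite ginvM ginvK -gmulA gmulKVg.
by move/coset_index_eq; rewrite !coset_index_rep.
Qed.

(* A right action, matching the composition order of [{perm _}]. *)
Definition coset_perm g : {perm 'I_n} := perm (@coset_perm_inj g).

Lemma coset_permM g h : coset_perm (gmul g h) = (coset_perm g * coset_perm h)%g.
Proof.
apply/permP => i; rewrite permM !permE; apply/coset_index_eq.
rewrite !ginvM !ginvK -!gmulA gmulKVg.
have := subgroupV sK ((proj1 ci) (gmul (ginv g) (f i))).
by rewrite !ginvM !ginvK gmulA.
Qed.

Lemma coset_perm_eq_sub x k : K k -> coset_perm x = coset_perm k -> K x.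
Proof.
move=> Kk /(congr1 (fun s : {perm _} => s (idx (gone G)))).
rewrite !permE => /coset_index_eq; set i0 := idx (gone G).
have Kf : K (f i0).
  by have := subgroupV sK ((proj1 ci) (gone G)); rewrite gmulg1 ginvK.
rewrite ginvM ginvK => Kc.
have := subgroupM sK (subgroupM sK Kf Kc) (subgroupV sK Kf).
rewrite -!gmulA gmulKVg gmulgV gmulg1 => Kxk.
by have := subgroupM sK Kxk Kk; rewrite -gmulA gmulV gmulg1.
Qed.

Definition coset_perm_image : {set {perm 'I_n}} :=
  finset (fun s => `[< exists g, coset_perm g = s >]).

Lemma coset_perm_image_group : group_set coset_perm_image.
Proof.
apply/group_setP; split.
  rewrite inE; apply/asboolP; exists (gone G).
  by apply: (@mulgI _ (coset_perm (gone G))); rewrite -coset_permM gmul1 mulg1.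
move=> s t; rewrite !inE => /asboolP [g <-] /asboolP [h <-].
by apply/asboolP; exists (gmul g h); apply: coset_permM.
Qed.

(* Corestricting [coset_perm] to its image makes it surjective. *)
Lemma coset_action_epi : exists (gT : finGroupType) (phi : G -> gT),
  is_epi phi /\ forall x k, K k -> phi x = phi k -> K x.
Proof.
pose A := Group coset_perm_image_group.
have permA g : coset_perm g \in A by rewrite inE; apply/asboolP; exists g.
exists [subg A]%type, (fun g => subg A (coset_perm g)); split; first split.
- by move=> x y; rewrite coset_permM subgM.
- move=> z; have := subgP z; rewrite inE => /asboolP [g eg].
  by exists g; rewrite eg sgvalK.
by move=> x k Kk /(congr1 val); rewrite !subgK //; apply: coset_perm_eq_sub.
Qed.

End CosetIndex.

Section Epimorphisms.
Variables (G : agroup) (gT : finGroupType) (phi : G -> gT).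
Hypothesis epi : is_epi phi.

Lemma epi1 : phi (gone G) = 1%g.
Proof. by apply: (@mulgI _ (phi (gone G))); rewrite -(proj1 epi) gmul1 mulg1. Qed.

Lemma epiV x : phi (ginv x) = (phi x)^-1%g.
Proof. by apply: (@mulgI _ (phi x)); rewrite mulgV -(proj1 epi) gmulgV epi1. Qed.

Variables (K : G -> Prop) (n : nat) (f : 'I_n -> G) (idx : G -> 'I_n).
Hypotheses (sK : is_subgroup K) (ci : is_coset_index K f idx).

Lemma epi_cosets_cover :
  [set: gT] = [set (phi (f p.1) * p.2)%g | p in setX [set: 'I_n] (img phi K)].
Proof.
apply/setP=> z; rewrite inE; apply/esym/imsetP.
have [x <-] := proj2 epi z.
exists (idx x, phi (gmul (ginv (f (idx x))) x)).
  rewrite !inE /=; apply/asboolP.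
  by exists (gmul (ginv (f (idx x))) x); split=> //; apply: (proj1 ci).
by rewrite /= -(proj1 epi) gmulKVg.
Qed.

Lemma card_epi_le : #|[set: gT]| <= n * #|img phi K|.
Proof.
rewrite epi_cosets_cover; apply: leq_trans (leq_imset_card _ _) _.
by rewrite cardsX cardsT card_ord.
Qed.

(* When [K] is the full preimage of its image, distinct cosets have disjoint
   images, so the cover of [epi_cosets_cover] is a partition. *)
Lemma card_epi_eq : (forall x k, K k -> phi x = phi k -> K x) ->
  #|[set: gT]| = n * #|img phi K|.
Proof.
move=> saturated; rewrite epi_cosets_cover card_in_imset ?cardsX ?cardsT ?card_ord //.
move=> [i y] [j y']; rewrite !inE /= => /asboolP [k [Kk <-]] /asboolP [k' [Kk' <-]] /= E.
have Kji : K (gmul (ginv (f j)) (f i)).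
  have phi1 : phi (gmul (gmul (ginv (f j)) (f i)) (gmul k (ginv k'))) = phi (gone G).
    rewrite !(proj1 epi) !epiV epi1 mulgA -(mulgA _ (phi (f i))) E.
    by rewrite mulKg mulgV.
  have := subgroupM sK (saturated _ _ (subgroup1 sK) phi1) (subgroupM sK Kk' (subgroupV sK Kk)).
  by rewrite -gmulA [gmul (gmul k _) _]gmulA -[gmul (gmul k _) k']gmulA gmulV gmulg1 gmulgV gmulg1.
have ji : j = i by have := (proj2 ci) _ _ Kji; rewrite (coset_index_rep sK ci).
by subst j; congr (_, _); move/mulgI: E.
Qed.

End Epimorphisms.

Lemma trivial_epi (G : agroup) : is_epi (fun _ : G => 1%g : 'I_1).
Proof. by split=> [x y|z]; [rewrite mulg1 | exists (gone G); apply/esym/ord1]. Qed.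

Lemma has_index_of_coset_map (G : agroup) (K : G -> Prop) (T : finType) (p : G -> T) :
  (forall x y, p x = p y <-> K (gmul (ginv x) y)) -> exists c, has_index K c.
Proof.
move=> hp; pose P : {set T} := finset (fun z => `[< exists x, p x = z >]).
have exP (i : 'I_#|P|) : exists x, p x = enum_val i.
  by have := enum_valP i; rewrite inE => /asboolP.
exists #|P|, (fun i => proj1_sig (cid (exP i))) => x.
have Px : p x \in P by rewrite inE; apply/asboolP; exists x.
exists (enum_rank_in Px (p x)); split.
  by case: (cid _) => y /= ey; apply/hp; rewrite ey enum_rankK_in.
move=> j; case: (cid _) => y /= ey /hp e; rewrite ey in e.
by rewrite -{1}(enum_valK_in Px j) e.
Qed.

Lemma has_indexI (G : agroup) (K1 K2 : G -> Prop) a b :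
  is_subgroup K1 -> is_subgroup K2 -> has_index K1 a -> has_index K2 b ->
  exists c, has_index (fun x => K1 x /\ K2 x) c.
Proof.
move=> s1 s2 /has_index_coset_index [f1 [i1 c1]] /has_index_coset_index [f2 [i2 c2]].
apply: (@has_index_of_coset_map _ _ _ (fun x => (i1 x, i2 x))) => x y; split.
  by case=> /(coset_index_eq s1 c1) ? /(coset_index_eq s2 c2).
by case=> /(coset_index_eq s1 c1) -> /(coset_index_eq s2 c2) ->.
Qed.

(* The cosets of [K'] map onto those of [K]; a surjection from at most [a]
   onto [a] points is injective, so [K] lies in one coset of [K']. *)
Lemma sub_of_has_index_le (G : agroup) (K K' : G -> Prop) a c :
  is_subgroup K -> is_subgroup K' -> (forall x, K' x -> K x) ->
  has_index K a -> has_index K' c -> c <= a -> forall x, K x -> K' x.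
Proof.
move=> sK sK' sub /has_index_coset_index [f [idx ci]] /has_index_coset_index [f' [idx' ci']] ca x Kx.
pose m (i : 'I_c) := idx (f' i).
have midx y : m (idx' y) = idx y.
  by apply/(coset_index_eq sK ci); apply: sub; exact: (proj1 ci').
have surj : [set: 'I_a] \subset [set m i | i in [set: 'I_c]].
  apply/subsetP => j _; apply/imsetP; exists (idx' (f j)); first by rewrite in_setT.
  by rewrite midx (coset_index_rep sK ci).
have cardim : #|[set m i | i in [set: 'I_c]]| = c.
  apply/eqP; rewrite eqn_leq; apply/andP; split.
    by apply: leq_trans (leq_imset_card _ _) _; rewrite cardsT card_ord.
  by apply: leq_trans ca _; have := subset_leq_card surj; rewrite cardsT card_ord.
have inj : injective m.
  by move=> i j; apply: (imset_injP _ _ _) => //; rewrite cardim cardsT card_ord.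
have := inj (idx' x) (idx' (gone G)); rewrite !midx.
have -> : idx x = idx (gone G).
  by apply/(coset_index_eq sK ci); rewrite gmulg1; apply: subgroupV.
move=> /(_ erefl) /(coset_index_eq sK' ci'); rewrite gmulg1 => /(subgroupV sK').
by rewrite ginvK.
Qed.

(* A finite index subgroup [K] containing [H] of maximal index is contained in
   every other one, hence equals [H] by closedness. *)
Lemma closed_infinite_index_unbounded (G : agroup) (H : G -> Prop) :
  is_subgroup H -> profinitely_closed H -> (forall n : nat, ~ has_index H n) ->
  forall m, exists L c, [/\ is_subgroup L, forall x, H x -> L x, has_index L c & m <= c].
Proof.
move=> sH cH nH m.
case: (pselect (exists L c, [/\ is_subgroup L, forall x, H x -> L x, has_index L c & m <= c]))
  => // nex.
pose P k := `[< exists L, [/\ is_subgroup L, forall x, H x -> L x & has_index L k] >].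
have exP : exists k, P k.
  by exists 1; apply/asboolP; exists (fun _ => True); split; [exact: is_subgroupT | | exact: has_indexT].
have ubP i : P i -> i <= m.
  move/asboolP=> [L [sL HL iL]]; rewrite leqNgt; apply/negP => mi.
  by apply: nex; exists L, i; split=> //; apply: ltnW.
have [a /asboolP [K [sK HK iK]] maxa] := ex_maxnP exP ubP.
have KH x : K x -> H x.
  move=> Kx; apply: cH => K' [sK' [b iK']] HK'.
  have sKK' := is_subgroupI sK sK'.
  have [c ic] := has_indexI sK sK' iK iK'.
  have ca : c <= a.
    by apply: maxa; apply/asboolP; exists (fun y => K y /\ K' y); split=> // y Hy; split; auto.
  by have [] := sub_of_has_index_le sK sKK' (fun y => @proj1 _ _) iK ic ca Kx.
have HK_eq : H = K by apply: funext => x; apply: propext; split; auto.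
by case: (nH a); rewrite HK_eq.
Qed.

Local Open Scope ring_scope.

Section ProfiniteMeasure.
Variables (R : realType) (G : agroup).

Lemma pmeasure_le_ratio (S : G -> Prop) (gT : finGroupType) (phi : G -> gT) :
  is_epi phi -> pmeasure R S <= #|img phi S|%:R / #|[set: gT]|%:R.
Proof.
move=> epi; apply: ge_inf; last by exists gT, phi.
by exists 0 => r [? [? [_ ->]]]; apply: divr_ge0.
Qed.

Lemma pmeasure_ge (S : G -> Prop) (a : R) :
  (forall (gT : finGroupType) (phi : G -> gT), is_epi phi ->
     a <= #|img phi S|%:R / #|[set: gT]|%:R) ->
  a <= pmeasure R S.
Proof.
move=> lb; apply: lb_le_inf; last by move=> r [gT [phi [epi ->]]]; apply: lb.
by eexists; exists ('I_1 : finGroupType), (fun _ => 1%g); split; first exact: trivial_epi.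
Qed.

Lemma pmeasure_ge0 (S : G -> Prop) : 0 <= pmeasure R S.
Proof. by apply: pmeasure_ge => gT phi _; apply: divr_ge0. Qed.

Lemma le_pmeasure (S T : G -> Prop) :
  (forall x, S x -> T x) -> pmeasure R S <= pmeasure R T.
Proof.
move=> ST; apply: pmeasure_ge => gT phi epi.
apply: le_trans (pmeasure_le_ratio S epi) _.
rewrite ler_wpM2r ?invr_ge0 // ler_nat; apply: subset_leq_card.
by apply/subsetP => z; rewrite !inE => /asboolP [x [Sx <-]]; apply/asboolP; exists x; auto.
Qed.

Lemma pmeasure_has_index (K : G -> Prop) n :
  is_subgroup K -> has_index K n -> pmeasure R K = 1 / n%:R.
Proof.
move=> sK /has_index_coset_index [f [idx ci]].
have card_pos (gT : finGroupType) : (0 < #|[set: gT]|)%N.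
  by apply/card_gt0P; exists 1%g; rewrite in_setT.
apply/le_anti/andP; split.
  have [gT [phi [epi saturated]]] := coset_action_epi sK ci.
  apply: le_trans (pmeasure_le_ratio K epi) _.
  have cardT := card_epi_eq epi sK ci saturated.
  have := card_pos gT; rewrite cardT muln_gt0 => /andP [n_gt0 img_gt0].
  by rewrite natrM invfM mulrCA mulfV ?mulr1 ?div1r // pnatr_eq0 -lt0n.
apply: pmeasure_ge => gT phi epi.
have le_card := card_epi_le epi ci.
have n_gt0 : (0 < n)%N by move: (leq_trans (card_pos gT) le_card); rewrite muln_gt0 => /andP [].
rewrite ler_pdivlMr ?ltr0n // mul1r mulrC ler_pdivrMr ?ltr0n //.
by rewrite -natrM ler_nat mulnC.
Qed.

End ProfiniteMeasure.

Lemma le0_of_le_invn (F : archiRealFieldType) (x : F) :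
  (forall m, exists c, (m <= c)%N /\ x <= 1 / c%:R) -> x <= 0.
Proof.
move=> small; rewrite leNgt; apply/negP => x_gt0.
have [c [mc xc]] := small (Num.Def.archi_bound x^-1).
have xVc : x^-1 < c%:R.
  apply: lt_le_trans (archi_boundP _) _; first by rewrite invr_ge0 ltW.
  by rewrite ler_nat.
have c_gt0 : 0 < c%:R :> F by apply: le_lt_trans xVc; rewrite invr_ge0 ltW.
move: xc; rewrite div1r -[x in x <= _]invrK lef_pV2 ?posrE ?invr_gt0 //.
by rewrite leNgt xVc.
Qed.

Theorem proposition2p1 (R : realType) (G : agroup) (H : G -> Prop) :
  is_subgroup H -> profinitely_closed H ->
  (forall n : nat, has_index H n -> pmeasure R H = (1 / n%:R)%R) /\
  ((forall n : nat, ~ has_index H n) -> pmeasure R H = 0%R).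
Proof.
move=> sH cH; split=> [n|nH]; first exact: pmeasure_has_index.
apply/le_anti/andP; split; last exact: pmeasure_ge0.
apply: le0_of_le_invn => m.
have [L [c [sL HL iL mc]]] := closed_infinite_index_unbounded sH cH nH m.
exists c; split=> //; rewrite -(pmeasure_has_index R sL iL).
exact: le_pmeasure.
Qed.
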